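(* Let $n\ge 1$, $0\le w\le n$, and let $U$ be an $n$-qubit Clifford operator that is a product of Clifford operators each of which acts either trivially on the first $w$ qubits or only as the control of a CNOT on them; in particular its symplectic matrix $M\in\mathrm{Sp}(2n,\mathbb{F}_2)$ satisfies $f_iM=f_i$ for all $1\le i\le w$. Then there exist vectors $u_1,\dots,u_{2w}\in\mathbb{F}_2^{2n}$ such that $$M' := M\, S_{u_1} S_{u_2}\cdots S_{u_{2w}}$$ satisfies $e_iM'=e_i$ and $f_iM'=f_i$ for all $1\le i\le w$, and $bM'\in\mathrm{span}\{e_j,f_j : w<j\le n\}$ for every $b\in\{e_j,f_j: w<j\le n\}$. That is, $2w$ Pauli $\pi/4$ rotations suffice to turn $U$ into a Clifford operator (up to Pauli operators and phases) supported only on the last $n-w$ qubits.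
   Context: Paulis and Cliffords are represented in the binary symplectic formalism. An $n$-qubit Pauli operator is identified (up to phase) with a row vector $v\in\mathbb{F}_2^{2n}$ via $P_v=\prod_{i=1}^n X_i^{v_i}Z_i^{v_{n+i}}$. The symplectic form is $\langle u,v\rangle=uJv^T$ with $J=\begin{bmatrix}0&I_n\\ I_n&0\end{bmatrix}$; $P_u,P_v$ commute iff $\langle u,v\rangle=0$. Let $e_1,\dots,e_{2n}$ be the standard basis of $\mathbb{F}_2^{2n}$ and $f_k:=e_{n+k}$ ($e_k$ corresponds to $X_k$, $f_k$ to $Z_k$). A Clifford $U$ is represented (ignoring Pauli corrections and phases) by a matrix $M_U$ with $M_UJM_U^T=J$, acting by $v\mapsto vM_U$ (conjugation $P\mapsto UPU^\dagger$); its $i$-th row is the image of the $i$-th basis vector. The Pauli $\pi/4$ rotation $R_{\pi/4}(P_u)$ maps $P\mapsto PP_u$ if $P$ anticommutes with $P_u$ and fixes $P$ otherwise; in symplectic form it acts as the transvection $E_u(v)=v+\langle u,v\rangle u$, whose matrix (row-vector convention $v\mapsto vS_u$) is denoted $S_u$. *)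

From HB Require Import structures.
From mathcomp Require Import all_boot all_order all_algebra.
Set Implicit Arguments. Unset Strict Implicit. Unset Printing Implicit Defensive.
Import GRing.Theory.
Local Open Scope ring_scope.

Notation F2 := 'F_2.

Section Symp.
Variable n : nat.

(* Coordinates of F_2^{2n} are indexed by 'I_(n + n):
   lshift n k  ~ coordinate k   (X part, e_k),
   rshift n k  ~ coordinate n+k (Z part, f_k = e_{n+k}). *)
Definition evec (k : 'I_n) : 'rV[F2]_(n + n) := delta_mx 0 (lshift n k).
Definition fvec (k : 'I_n) : 'rV[F2]_(n + n) := delta_mx 0 (rshift n k).

Definition Jmx : 'M[F2]_(n + n) := block_mx 0 1%:M 1%:M 0.

Definition sform (u v : 'rV[F2]_(n + n)) : F2 := (u *m Jmx *m v^T) 0 0.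

Definition symplectic (M : 'M[F2]_(n + n)) : Prop := M *m Jmx *m M^T = Jmx.

(* Transvection matrix S_u (row-vector convention):
   v *m S_u = v + <v,u> u = v + <u,v> u  (the form is symmetric over F_2). *)
Definition transv (u : 'rV[F2]_(n + n)) : 'M[F2]_(n + n) :=
  1%:M + (Jmx *m u^T) *m u.

(* Symplectic matrix of CNOT with control c and target t:
   X_c -> X_c X_t, Z_t -> Z_c Z_t, all other generators fixed. *)
Definition cnot_mx (c t : 'I_n) : 'M[F2]_(n + n) :=
  1%:M + delta_mx (lshift n c) (lshift n t) + delta_mx (rshift n t) (rshift n c).

Definition trivial_on_first (w : nat) (G : 'M[F2]_(n + n)) : Prop :=
  symplectic G /\
  forall i : 'I_n, (i < w)%N -> evec i *m G = evec i /\ fvec i *m G = fvec i.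

Definition allowed_gate (w : nat) (G : 'M[F2]_(n + n)) : Prop :=
  trivial_on_first w G \/
  exists c t : 'I_n, [/\ (c < w)%N, (w <= t)%N & G = cnot_mx c t].

Definition prod_mx (gs : seq 'M[F2]_(n + n)) : 'M[F2]_(n + n) :=
  foldr (fun G A => G *m A) 1%:M gs.

Definition apply_transv (M : 'M[F2]_(n + n)) (us : seq 'rV[F2]_(n + n)) :=
  foldl (fun A u => A *m transv u) M us.

(* v lies in span{e_j, f_j : w < j <= n} (1-based), i.e. in span of the
   coordinates with 0-based index >= w in both halves. *)
Definition in_last_span (w : nat) (v : 'rV[F2]_(n + n)) : Prop :=
  forall i : 'I_n, (i < w)%N -> v 0 (lshift n i) = 0 /\ v 0 (rshift n i) = 0.

End Symp.

(* Every gate fixes the Z generators f_1..f_w and preserves the symplectic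
   form, so M does too.  Qubit k <= w is then cleaned with two transvections:
   an optional S_{f_k} makes <e_k M, e_k> = 1, after which S_{e_k M + e_k}
   sends e_k M back to e_k.  Both transvections fix every vector that M
   already fixed and that is orthogonal to f_k, so the e_i with i < k and all
   f_i stay fixed.  Once M' fixes e_i and f_i for i <= w, it preserves their
   orthogonal complement, which is the span of the generators of the last
   n - w qubits. *)
From mathcomp Require Import all_boot all_order all_algebra.
From mathcomp Require Import ring.
Import GRing.Theory.
Local Open Scope ring_scope.
Set Implicit Arguments. Unset Strict Implicit.

Fact pchar_F2 : 2%N \in [pchar F2].
Proof. exact: pchar_Fp. Qed.

Lemma F2_cases (x : F2) : x = 0 \/ x = 1.
Proof. by case: x => [[|[|m]]] // Hm; [left|right]; apply: val_inj. Qed.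

Lemma addmx_pchar2 p q (A : 'M[F2]_(p, q)) : A + A = 0.
Proof. by apply/matrixP => i j; rewrite !mxE (addrr_pchar2 pchar_F2). Qed.

Lemma mul_rV_delta_mx (R : pzRingType) m p (x : 'rV[R]_m) a (b : 'I_p) :
  x *m delta_mx a b = x 0 a *: delta_mx 0 b.
Proof.
rewrite -(mul_delta_mx (0 : 'I_1)) mulmxA -colE [col a x]mx11_scalar.
by rewrite mul_scalar_mx mxE.
Qed.

Section SymplecticForm.
Variable n : nat.
Local Notation vec := 'rV[F2]_(n + n).

Lemma mulJmx (u : vec) : u *m Jmx n = row_mx (rsubmx u) (lsubmx u).
Proof.
by rewrite /Jmx -{1}(hsubmxK u) mul_row_block !mulmx0 !mulmx1 add0r addr0.
Qed.

Lemma trmx_Jmx : (Jmx n)^T = Jmx n.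
Proof. by rewrite /Jmx tr_block_mx !trmx0 trmx1. Qed.

Lemma sform_delta (u : vec) k : sform u (delta_mx 0 k) = (u *m Jmx n) 0 k.
Proof.
rewrite /sform trmx_delta mxE (bigD1 k) //= big1 ?addr0.
  by rewrite [delta_mx _ _ _ _]mxE !eqxx mulr1.
by move=> j /negbTE hj; rewrite [delta_mx _ _ _ _]mxE hj mulr0.
Qed.

Lemma sform_fvec (u : vec) i : sform u (fvec i) = u 0 (lshift n i).
Proof. by rewrite sform_delta mulJmx row_mxEr mxE. Qed.

Lemma sform_evec (u : vec) i : sform u (evec i) = u 0 (rshift n i).
Proof. by rewrite sform_delta mulJmx row_mxEl mxE. Qed.

Lemma sformC (u v : vec) : sform u v = sform v u.
Proof.
rewrite /sform -!trace_mx11 -[RHS]mxtrace_tr.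
by rewrite !trmx_mul trmxK trmx_Jmx mulmxA.
Qed.

Lemma sformDl (x y z : vec) : sform (x + y) z = sform x z + sform y z.
Proof. by rewrite /sform !mulmxDl mxE. Qed.

Lemma sformZl a (x z : vec) : sform (a *: x) z = a * sform x z.
Proof. by rewrite /sform -!scalemxAl mxE. Qed.

Lemma sformDr (x y z : vec) : sform z (x + y) = sform z x + sform z y.
Proof. by rewrite !(sformC z) sformDl. Qed.

Lemma sformZr a (x z : vec) : sform z (a *: x) = a * sform z x.
Proof. by rewrite !(sformC z) sformZl. Qed.

Lemma sformvv (u : vec) : sform u u = 0.
Proof.
rewrite /sform mulJmx -{3}(hsubmxK u) tr_row_mx mul_row_col -trace_mx11 mxtraceD.
by rewrite -[X in _ + X]mxtrace_tr trmx_mul trmxK (addrr_pchar2 pchar_F2).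
Qed.

Lemma sform_evec_fvec (i k : 'I_n) : sform (evec i) (fvec k) = (i == k)%:R.
Proof. by rewrite sform_fvec mxE eq_lshift eq_sym. Qed.

Lemma sform_fvec_evec (i k : 'I_n) : sform (fvec i) (evec k) = (i == k)%:R.
Proof. by rewrite sform_evec mxE eq_rshift eq_sym. Qed.

Lemma sform_evec_evec (i k : 'I_n) : sform (evec i) (evec k) = 0.
Proof. by rewrite sform_evec mxE eq_rlshift andbF. Qed.

Lemma sform_fvec_fvec (i k : 'I_n) : sform (fvec i) (fvec k) = 0.
Proof. by rewrite sform_fvec mxE eq_lrshift andbF. Qed.

Lemma transvE (u v : vec) : v *m transv u = v + sform v u *: u.
Proof.
rewrite /transv mulmxDr mulmx1 !mulmxA.
by rewrite [v *m Jmx n *m u^T]mx11_scalar mul_scalar_mx.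
Qed.

Lemma transv_id (u v : vec) : sform v u = 0 -> v *m transv u = v.
Proof. by move=> hvu; rewrite transvE hvu scale0r addr0. Qed.

Lemma transv_swap (v e : vec) : sform v e = 1 -> v *m transv (v + e) = e.
Proof.
move=> hve; rewrite transvE sformDr sformvv hve add0r scale1r.
by rewrite addrA addmx_pchar2 add0r.
Qed.

Definition sform_preserving (M : 'M[F2]_(n + n)) :=
  forall x y, sform (x *m M) (y *m M) = sform x y.

Lemma sform_preserving1 : sform_preserving 1%:M.
Proof. by move=> x y; rewrite !mulmx1. Qed.

Lemma sform_preservingM A B :
  sform_preserving A -> sform_preserving B -> sform_preserving (A *m B).
Proof. by move=> hA hB x y; rewrite !mulmxA hB hA. Qed.

Lemma symplectic_sform_preserving M : symplectic M -> sform_preserving M.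
Proof.
move=> hM x y; rewrite /sform trmx_mul.
by rewrite !mulmxA -(mulmxA x) -(mulmxA x) hM.
Qed.

Lemma transv_sform_preserving (u : vec) : sform_preserving (transv u).
Proof.
move=> x y; rewrite !transvE !sformDl !sformDr !sformZl !sformZr sformvv.
rewrite (sformC u y); set p := sform x u; set q := sform y u.
transitivity (sform x y + (p * q) *+ 2); first by ring.
by rewrite mulr2n (addrr_pchar2 pchar_F2) addr0.
Qed.

Lemma apply_transv_sform_preserving M us :
  sform_preserving M -> sform_preserving (apply_transv M us).
Proof.
elim: us M => [|u us IH] M hM //=.
exact/IH/sform_preservingM/transv_sform_preserving.
Qed.

Lemma sform_preserving_pair M (a b : vec) :
  (forall x, x *m M = x + sform x b *: a + sform x a *: b) ->
  sform a b = 0 -> sform a a = 0 -> sform b b = 0 -> sform_preserving M.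
Proof.
move=> hM hab haa hbb x y; rewrite !hM !sformDl !sformDr !sformZl !sformZr.
rewrite haa hbb hab (sformC b a) hab (sformC a y) (sformC b y).
set p := sform x b; set q := sform x a; set r := sform y b; set s := sform y a.
transitivity (sform x y + (r * q + s * p) *+ 2); first by ring.
by rewrite mulr2n (addrr_pchar2 pchar_F2) addr0.
Qed.

Lemma cnot_mxE (c t : 'I_n) (x : vec) :
  x *m cnot_mx c t = x + sform x (fvec c) *: evec t + sform x (evec t) *: fvec c.
Proof.
by rewrite /cnot_mx !mulmxDr mulmx1 !mul_rV_delta_mx sform_fvec sform_evec.
Qed.

Lemma cnot_sform_preserving (c t : 'I_n) : c != t -> sform_preserving (cnot_mx c t).
Proof.
move=> hct; apply: (@sform_preserving_pair _ (evec t) (fvec c)).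
- exact: cnot_mxE.
- by rewrite sform_evec_fvec eq_sym (negbTE hct).
- exact: sform_evec_evec.
- exact: sform_fvec_fvec.
Qed.

Variable w : nat.

Definition fixes_evecs k (M : 'M[F2]_(n + n)) :=
  forall i : 'I_n, (i < k)%N -> evec i *m M = evec i.
Definition fixes_fvecs k (M : 'M[F2]_(n + n)) :=
  forall i : 'I_n, (i < k)%N -> fvec i *m M = fvec i.

Lemma allowed_gate_props G :
  allowed_gate w G -> sform_preserving G /\ fixes_fvecs w G.
Proof.
case=> [[hG hfix] | [c [t [hc ht ->]]]].
  by split=> [|i hi]; [exact: symplectic_sform_preserving | case: (hfix i hi)].
have hct : c != t by rewrite neq_ltn (leq_trans hc ht).
split=> [|i hi]; first exact: cnot_sform_preserving.
rewrite cnot_mxE sform_fvec_fvec sform_fvec_evec scale0r addr0.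
have /negbTE hit : i != t by rewrite -val_eqE neq_ltn (leq_trans hi ht).
by rewrite hit scale0r addr0.
Qed.

Lemma prod_mx_props gs : (forall G, G \in gs -> allowed_gate w G) ->
  sform_preserving (prod_mx gs) /\ fixes_fvecs w (prod_mx gs).
Proof.
elim: gs => [|G gs IH] hgs /=.
  by split=> [|i _]; [exact: sform_preserving1 | rewrite mulmx1].
have [hG fixG] := allowed_gate_props (hgs G (mem_head _ _)).
have [hgs' fixgs] : sform_preserving (prod_mx gs) /\ fixes_fvecs w (prod_mx gs).
  by apply: IH => G' hG'; apply: hgs; rewrite in_cons hG' orbT.
split=> [|i hi]; first exact: sform_preservingM.
by rewrite mulmxA fixG // fixgs.
Qed.

(* <x, e M + e> = <x M, e M> + <x, e> = 2 <x, e> = 0 *)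
Lemma transv_pivot_fixed M (e x : vec) : sform_preserving M -> x *m M = x ->
  x *m (M *m transv (e *m M + e)) = x.
Proof.
move=> hM hx; rewrite mulmxA hx transv_id // sformDr -{1}hx hM.
exact: (addrr_pchar2 pchar_F2).
Qed.

Lemma pivot_scale (e f v : vec) : sform f e = 1 -> sform v f = 1 ->
  exists a : F2, sform (v *m transv (a *: f)) e = 1.
Proof.
move=> hfe hvf; case: (F2_cases (sform v e)) => hve; last first.
  by exists 0; rewrite transv_id ?hve // sformZr mul0r.
by exists 1; rewrite scale1r transvE hvf scale1r sformDl hve hfe add0r.
Qed.

Lemma clear_qubit M (k : 'I_n) : (k < w)%N ->
  sform_preserving M -> fixes_fvecs w M -> fixes_evecs k M ->
  exists u1 u2, fixes_fvecs w (M *m transv u1 *m transv u2) /\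
                fixes_evecs k.+1 (M *m transv u1 *m transv u2).
Proof.
move=> hk hM fixf fixe.
have hvf : sform (evec k *m M) (fvec k) = 1.
  by rewrite -(fixf k hk) hM sform_evec_fvec eqxx.
have hfe : sform (fvec k) (evec k) = 1 by rewrite sform_fvec_evec eqxx.
have [a ha] := pivot_scale hfe hvf.
set M1 := M *m transv (a *: fvec k).
have hM1 : sform_preserving M1.
  exact/sform_preservingM/transv_sform_preserving.
have fixM1 x : x *m M = x -> sform x (fvec k) = 0 -> x *m M1 = x.
  by move=> hx hxf; rewrite mulmxA hx transv_id // sformZr hxf mulr0.
exists (a *: fvec k), (evec k *m M1 + evec k); rewrite -/M1.
split=> [i hi | i].
  by apply: transv_pivot_fixed => //; apply: fixM1; rewrite ?fixf ?sform_fvec_fvec.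
rewrite ltnS leq_eqVlt => /orP[/eqP/val_inj -> | hik].
  by rewrite mulmxA transv_swap // /M1 mulmxA.
apply: transv_pivot_fixed => //; apply: fixM1; first exact: fixe.
have /negbTE hik' : i != k by rewrite -val_eqE neq_ltn hik.
by rewrite sform_evec_fvec hik'.
Qed.

Lemma clear_first_qubits M : (w <= n)%N ->
  sform_preserving M -> fixes_fvecs w M -> forall k, (k <= w)%N ->
  exists us, size us = (2 * k)%N /\
    fixes_fvecs w (apply_transv M us) /\ fixes_evecs k (apply_transv M us).
Proof.
move=> hw hM fixf; elim=> [|k IH] hk.
  by exists [::]; split=> //; split=> // i; rewrite ltn0.
have [us [hsize [fixf' fixe']]] := IH (ltnW hk).
have [u1 [u2 hu]] := @clear_qubit _ (Ordinal (leq_trans hk hw)) hk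
  (apply_transv_sform_preserving us hM) fixf' fixe'.
exists (us ++ [:: u1; u2]).
by rewrite size_cat hsize mulnSr /apply_transv foldl_cat.
Qed.

Lemma in_last_span_image M (x : vec) :
  sform_preserving M -> fixes_evecs w M -> fixes_fvecs w M ->
  (forall i : 'I_n, (i < w)%N -> sform x (evec i) = 0 /\ sform x (fvec i) = 0) ->
  in_last_span w (x *m M).
Proof.
move=> hM fixe fixf hx i hi; have [hxe hxf] := hx i hi.
by rewrite -sform_fvec -sform_evec -(fixe i hi) -(fixf i hi) !hM.
Qed.

End SymplecticForm.

Theorem lemmaA2 (n w : nat) (hn : (0 < n)%N) (hw : (w <= n)%N)
  (M : 'M['F_2]_(n + n))
  (hU : exists gs : seq 'M['F_2]_(n + n),
          (forall G, G \in gs -> allowed_gate w G) /\ M = prod_mx gs) :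
  exists us : seq 'rV['F_2]_(n + n),
    size us = (2 * w)%N /\
    let M' := apply_transv M us in
    (forall i : 'I_n, (i < w)%N ->
       evec i *m M' = evec i /\ fvec i *m M' = fvec i) /\
    (forall j : 'I_n, (w <= j)%N ->
       in_last_span w (evec j *m M') /\ in_last_span w (fvec j *m M')).
Proof.
have [gs [hgs ->]] := hU.
have [hM fixf] := prod_mx_props hgs.
have [us [hsize [fixf' fixe']]] := clear_first_qubits hw hM fixf (leqnn w).
have hM' := apply_transv_sform_preserving us hM.
exists us; split=> //; split=> [i hi | j hj]; first by rewrite fixe' ?fixf'.
have hji (i : 'I_n) : (i < w)%N -> (j == i) = false.
  by move=> hi; apply/negbTE; rewrite -val_eqE neq_ltn (leq_trans hi hj) orbT.
split; apply: in_last_span_image => // i /hji hij.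
  by rewrite sform_evec_evec sform_evec_fvec hij.
by rewrite sform_fvec_evec sform_fvec_fvec hij.
Qed.
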